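(* Let $K>0$, $\mu>0$, $h>0$, and $r=h/H\in(0,1)$. Consider the homogeneous controlled patch problem (context) and suppose that, for some $k>0$, $T(x,t)=e^{-Kk^2t}\phi(x)$ is a solution with $\phi\not\equiv0$ even of the form $$\phi(x)=\begin{cases}A\cos kx, & |x|<h/4,\\ C+D\cos[k(x\mp\tfrac h2)]\pm E\sin[k(x\mp \tfrac h2)], & h/4\le \pm x\le 3h/4,\\ B\cos[k(x\mp h)], & 3h/4\le \pm x\le h,\end{cases}$$ with $\phi,\phi'$ continuous and $2h$-periodic. Then $$\cos\frac{kh}{2}\,\sin\frac{kh}{4}\left[\Big(\frac{1-7r^2/48}{1-r^2/48}\Big)\frac{4}{kh}\sin\frac{kh}{4}+\Big(\frac{k^2h^2}{\mu}-1\Big)\cos\frac{kh}{4}\right]=0 .$$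
   Context: Homogeneous controlled patch problem (governing perturbations about an equilibrium). A field $T(x,t)$, $2h$-periodic in $x$, satisfies $T_t=KT_{xx}+\frac{K\mu}{h^2}g(x,T)$, where $g$ is piecewise constant: on the right action region $h/4<x<3h/4$, $g=T_{\mathrm{int}}-\frac2h\int_{h/4}^{3h/4}T\,dx$; on the left action region $-3h/4<x<-h/4$, $g=T_{\mathrm{int}}-\frac2h\int_{-3h/4}^{-h/4}T\,dx$; and $g=0$ on the core $|x|<h/4$ and buffer $3h/4<|x|\le h$. Here $T_c=\frac2h\int_{-h/4}^{h/4}T\,dx$ is the core average and, with $r=h/H$, $$T_{\mathrm{int}}=T_c\,\frac{1-13r^2/48}{1-r^2/48}$$ (this is the action-region average of the parabolic interpolant through zero boundary values at $x=\pm H$ with core average $T_c$). Solutions are understood piecewise, with $T,T_x$ continuous across region boundaries. *)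

From Stdlib Require Export Reals.
Open Scope R_scope.

Definition is_integral (f : R -> R) (a b v : R) : Prop :=
  exists pr : Riemann_integrable f a b, RiemannInt pr = v.

Definition T_int (h H Tc : R) : R :=
  let r := h / H in Tc * ((1 - 13 * r ^ 2 / 48) / (1 - r ^ 2 / 48)).

(* The piecewise-constant control term g(x,T) at time t, given the integrals
   Ic = int_{-h/4}^{h/4} T, Il = int_{-3h/4}^{-h/4} T, Ir = int_{h/4}^{3h/4} T. *)
Definition g_ctrl (h H x Ic Il Ir : R) : R :=
  let Tc := 2 / h * Ic in
  if Rlt_dec (h / 4) x then
    (if Rlt_dec x (3 * h / 4) then T_int h H Tc - 2 / h * Ir else 0)
  else if Rlt_dec (- (3 * h / 4)) x then
    (if Rlt_dec x (- (h / 4)) then T_int h H Tc - 2 / h * Il else 0)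
  else 0.

Definition region_interior (h x : R) : Prop :=
  - h < x <= h /\ Rabs x <> h / 4 /\ Rabs x <> 3 * h / 4.

(* T solves the homogeneous controlled patch problem
   T_t = K T_xx + (K mu / h^2) g(x,T), 2h-periodic in x, understood piecewise:
   T and T_x exist and are continuous everywhere (across region boundaries),
   and the PDE holds classically in the interior of each region. *)
Definition solves_patch (K mu h H : R) (T : R -> R -> R) : Prop :=
  (forall x t, T (x + 2 * h) t = T x t) /\
  exists Tx : R -> R -> R,
    (forall x t, derivable_pt_lim (fun y => T y t) x (Tx x t)) /\
    (forall x t, continuity_pt (fun y => Tx y t) x) /\
    forall t, exists Ic Il Ir : R,
      is_integral (fun y => T y t) (- (h / 4)) (h / 4) Ic /\
      is_integral (fun y => T y t) (- (3 * h / 4)) (- (h / 4)) Il /\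
      is_integral (fun y => T y t) (h / 4) (3 * h / 4) Ir /\
      forall x, region_interior h x ->
        exists Txx Tt : R,
          derivable_pt_lim (fun y => Tx y t) x Txx /\
          derivable_pt_lim (fun s => T x s) t Tt /\
          Tt = K * Txx + K * mu / h ^ 2 * g_ctrl h H x Ic Il Ir.

From Stdlib Require Import Reals Lra FunctionalExtensionality.
From Coquelicot Require Import Coquelicot.
Open Scope R_scope.

(* At t = 0 the separable solution reduces the problem to an eigenvalue problem
   for phi. Continuity of phi and phi' at x = h/4 and x = 3h/4 gives four linear
   equations in A, B, C, D, E; the equation at the centre x = h/2 of the action
   region, where the core and action averages are explicit trigonometric
   integrals, gives a fifth. With s = sin (kh/4), c = cos (kh/4),
   cos (kh/2) = c^2 - s^2 and (1 - 7r^2/48)/(1 - r^2/48) the mean of 1 and the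
   T_int factor, this system has only the trivial solution unless the stated
   product vanishes; a trivial solution makes phi vanish on one period, hence
   everywhere. *)

Lemma continuity_pt_eq_adherent (f g : R -> R) (a : R) :
  continuity_pt f a -> continuity_pt g a ->
  (forall e, 0 < e -> exists y, Rabs (y - a) < e /\ f y = g y) -> f a = g a.
Proof.
  intros Hf Hg Hnear.
  assert (Hu := continuity_pt_minus f g a Hf Hg).
  destruct (Req_dec (f a - g a) 0) as [H0|H0]; [lra|exfalso].
  destruct (Hu (Rabs (f a - g a)) (Rabs_pos_lt _ H0)) as [d [Hd Hclose]].
  destruct (Hnear d Hd) as [y [Hy Hfgy]].
  destruct (Req_dec y a) as [->|Hya]; [lra|].
  assert (Hlt := Hclose y (conj (conj I (not_eq_sym Hya)) Hy)).
  simpl in Hlt. unfold R_dist, minus_fct in Hlt.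
  rewrite Hfgy, Rminus_diag, Rminus_0_l, Rabs_Ropp in Hlt. lra.
Qed.

Lemma continuity_pt_eq_left (f g : R -> R) (a d : R) : 0 < d ->
  continuity_pt f a -> continuity_pt g a ->
  (forall x, a - d < x < a -> f x = g x) -> f a = g a.
Proof.
  intros Hd Hf Hg Hfg. apply continuity_pt_eq_adherent; auto.
  intros e He. exists (a - Rmin e d / 2).
  assert (Rmin e d <= e) by apply Rmin_l. assert (Rmin e d <= d) by apply Rmin_r.
  assert (0 < Rmin e d) by (apply Rmin_pos; lra).
  split; [apply Rabs_def1; lra | apply Hfg; lra].
Qed.

Lemma continuity_pt_eq_right (f g : R -> R) (a d : R) : 0 < d ->
  continuity_pt f a -> continuity_pt g a ->
  (forall x, a < x < a + d -> f x = g x) -> f a = g a.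
Proof.
  intros Hd Hf Hg Hfg. apply continuity_pt_eq_adherent; auto.
  intros e He. exists (a + Rmin e d / 2).
  assert (Rmin e d <= e) by apply Rmin_l. assert (Rmin e d <= d) by apply Rmin_r.
  assert (0 < Rmin e d) by (apply Rmin_pos; lra).
  split; [apply Rabs_def1; lra | apply Hfg; lra].
Qed.

Lemma derive_eq_on_open (f f' g : R -> R) (a b x l : R) :
  (forall y, derivable_pt_lim f y (f' y)) -> a < x < b ->
  (forall y, a < y < b -> f y = g y) -> derivable_pt_lim g x l -> f' x = l.
Proof.
  intros Hf Hx Hfg Hg. apply (uniqueness_limite f x); auto.
  apply (derivable_pt_lim_locally_ext g f x a b); auto.
  intros y Hy. symmetry. auto.
Qed.

Lemma C1_interface (f f' g1 g1' g2 g2' : R -> R) (a d : R) : 0 < d ->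
  (forall x, derivable_pt_lim f x (f' x)) -> continuity_pt f' a ->
  (forall x, derivable_pt_lim g1 x (g1' x)) -> continuity_pt g1' a ->
  (forall x, derivable_pt_lim g2 x (g2' x)) -> continuity_pt g2' a ->
  (forall x, a - d < x < a -> f x = g1 x) ->
  (forall x, a < x < a + d -> f x = g2 x) ->
  g1 a = g2 a /\ g1' a = g2' a.
Proof.
  intros Hd Hf Hf'c Hg1 Hg1'c Hg2 Hg2'c Hfg1 Hfg2.
  assert (Hcont : forall u u' : R -> R, (forall x, derivable_pt_lim u x (u' x)) ->
    continuity_pt u a) by (intros u u' Hu; exact (derivable_continuous_pt _ _ (exist _ _ (Hu a)))).
  split.
  - rewrite <- (continuity_pt_eq_left f g1 a d), <- (continuity_pt_eq_right f g2 a d);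
      eauto.
  - rewrite <- (continuity_pt_eq_left f' g1' a d), <- (continuity_pt_eq_right f' g2' a d);
      auto; intros x Hx.
    + apply (derive_eq_on_open f f' g2 a (a + d)); auto.
    + apply (derive_eq_on_open f f' g1 (a - d) a); auto.
Qed.

Lemma is_integral_antiderivative (f g G : R -> R) (a b v : R) : a <= b ->
  (forall x, derivable_pt_lim G x (g x)) -> (forall x, continuity_pt g x) ->
  (forall x, a < x < b -> f x = g x) -> is_integral f a b v -> v = G b - G a.
Proof.
  intros Hab HG Hg Hfg [pr <-].
  rewrite <- RInt_Reals, (RInt_ext f g).
  - apply is_RInt_unique, (is_RInt_derive G g); intros x _.
    + apply is_derive_Reals, HG.
    + apply continuity_pt_filterlim, Hg.
  - rewrite Rmin_left, Rmax_right by lra. exact Hfg.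
Qed.

Lemma periodic_shift_Z (f : R -> R) (p : R) : (forall x, f (x + p) = f x) ->
  forall (n : Z) x, f (x + IZR n * p) = f x.
Proof.
  intros Hp n. induction n as [|n IH|n IH] using Z.peano_ind; intro x.
  - rewrite Rmult_0_l, Rplus_0_r. reflexivity.
  - rewrite succ_IZR, <- (IH x), <- (Hp (x + IZR n * p)). f_equal. ring.
  - rewrite <- (IH x), <- (Hp (x + IZR (Z.pred n) * p)), <- Z.sub_1_r, minus_IZR.
    f_equal. ring.
Qed.

Lemma periodic_eq_zero (f : R -> R) (a p : R) : 0 < p -> (forall x, f (x + p) = f x) ->
  (forall x, a <= x <= a + p -> f x = 0) -> forall x, f x = 0.
Proof.
  intros Hp Hper Hzero x.
  set (u := (x - a) / p). set (n := (up u - 1)%Z).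
  assert (Hu : x - a = u * p) by (unfold u; field; lra).
  assert (Hn : IZR n * p <= x - a <= IZR n * p + p).
  { destruct (archimed u). unfold n. rewrite minus_IZR. nra. }
  replace x with (x - IZR n * p + IZR n * p) by ring.
  rewrite (periodic_shift_Z f p Hper). apply Hzero. lra.
Qed.

Lemma Rmult_eq_0_reg_r (x y : R) : x * y = 0 -> y <> 0 -> x = 0.
Proof. intros Hxy Hy. destruct (Rmult_integral _ _ Hxy); tauto. Qed.

Lemma patch_system_det (s c rho q m A B C D E : R) :
  A * c - C - D * c + E * s = 0 -> A * s + D * s + E * c = 0 ->
  C + D * c + E * s - B * c = 0 -> - (D * s) + E * c - B * s = 0 ->
  rho * q * A * s - C - q * D * s + m * C = 0 ->
  ~ (A = 0 /\ B = 0 /\ C = 0 /\ D = 0 /\ E = 0) ->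
  (c * c - s * s) * s * ((1 + rho) / 2 * q * s + (m - 1) * c) = 0.
Proof.
  intros E1 E2 E3 E4 E5 Hnontriv.
  destruct (Req_dec ((c * c - s * s) * s * ((1 + rho) / 2 * q * s + (m - 1) * c)) 0)
    as [|Hdet]; [assumption|exfalso; apply Hnontriv].
  destruct (Rmult_neq_0_reg _ _ Hdet) as [Hcs HX].
  destruct (Rmult_neq_0_reg _ _ Hcs) as [Hc2 Hs].
  assert (HE : E = 0).
  { apply (Rmult_eq_0_reg_r _ (c * c - s * s)); auto.
    transitivity ((c * (A * s + D * s + E * c) - s * (A * c - C - D * c + E * s)
       - s * (C + D * c + E * s - B * c) + c * (- (D * s) + E * c - B * s)) / 2).
    - field.
    - rewrite E1, E2, E3, E4. field. }
  subst E.
  assert (HD : D = 0).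
  { apply (Rmult_eq_0_reg_r _ (s * ((1 + rho) / 2 * q * s + (m - 1) * c)));
      [|intro H0; apply Hdet; rewrite Rmult_assoc, H0; ring].
    transitivity ((s * (rho * q * A * s - C - q * D * s + m * C)
       - rho * q * s * (A * s + D * s + 0 * c)
       + (1 - m) * (c * (A * s + D * s + 0 * c) - s * (A * c - C - D * c + 0 * s)))
       / -2).
    - field.
    - rewrite E1, E2, E5. field. }
  subst D.
  assert (HA : A = 0) by (apply (Rmult_eq_0_reg_r _ s); auto; lra).
  subst A.
  assert (HB : B = 0) by (apply (Rmult_eq_0_reg_r _ s); auto; lra).
  repeat split; auto; lra.
Qed.

Lemma separable_patch_profile (K mu h H lam : R) (phi : R -> R) :
  solves_patch K mu h H (fun x t => exp (- (lam * t)) * phi x) ->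
  (forall x, phi (x + 2 * h) = phi x) /\
  exists dphi : R -> R,
    (forall x, derivable_pt_lim phi x (dphi x)) /\ (forall x, continuity_pt dphi x) /\
    exists Ic Il Ir : R,
      is_integral phi (- (h / 4)) (h / 4) Ic /\ is_integral phi (h / 4) (3 * h / 4) Ir /\
      forall x, region_interior h x -> exists Txx : R,
        derivable_pt_lim dphi x Txx /\
        - lam * phi x = K * Txx + K * mu / h ^ 2 * g_ctrl h H x Ic Il Ir.
Proof.
  intros [Hper [Tx [HTx [HTxc Ht]]]].
  assert (Hslice : (fun y => exp (- (lam * 0)) * phi y) = phi).
  { apply functional_extensionality. intro y.
    rewrite Rmult_0_r, Ropp_0, exp_0. ring. }
  split.
  { intro x. specialize (Hper x 0). cbv beta in Hper.
    rewrite Rmult_0_r, Ropp_0, exp_0, !Rmult_1_l in Hper. exact Hper. }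
  exists (fun y => Tx y 0). split; [|split].
  - intro x. rewrite <- Hslice. apply HTx.
  - intro x. apply HTxc.
  - destruct (Ht 0) as [Ic [Il [Ir [HIc [_ [HIr Hpde]]]]]].
    rewrite Hslice in HIc, HIr.
    exists Ic, Il, Ir. repeat split; auto.
    intros x Hx. destruct (Hpde x Hx) as [Txx [Tt [HTxx [HTt Heq]]]].
    exists Txx. split; auto. rewrite <- Heq.
    apply (uniqueness_limite (fun t => exp (- (lam * t)) * phi x) 0); auto.
    apply is_derive_Reals. auto_derive; auto.
    rewrite Rmult_0_r, Ropp_0, exp_0. ring.
Qed.

Section Profile.

Variables (k h A B C D E : R) (phi dphi : R -> R).
Hypotheses (hk : 0 < k) (hh : 0 < h).
Hypothesis hcore : forall x, Rabs x < h / 4 -> phi x = A * cos (k * x).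
Hypothesis hactR : forall x, h / 4 <= x <= 3 * h / 4 ->
  phi x = C + D * cos (k * (x - h / 2)) + E * sin (k * (x - h / 2)).
Hypothesis hactL : forall x, h / 4 <= - x <= 3 * h / 4 ->
  phi x = C + D * cos (k * (x + h / 2)) - E * sin (k * (x + h / 2)).
Hypothesis hbufR : forall x, 3 * h / 4 <= x <= h -> phi x = B * cos (k * (x - h)).
Hypothesis hbufL : forall x, 3 * h / 4 <= - x <= h -> phi x = B * cos (k * (x + h)).
Hypothesis hphi : forall x, derivable_pt_lim phi x (dphi x).
Hypothesis hdphi : forall x, continuity_pt dphi x.

Local Notation s := (sin (k * h / 4)).
Local Notation c := (cos (k * h / 4)).

Let core x := A * cos (k * x).
Let core' x := - (A * k * sin (k * x)).
Let action x := C + D * cos (k * (x - h / 2)) + E * sin (k * (x - h / 2)).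
Let action' x := k * (E * cos (k * (x - h / 2)) - D * sin (k * (x - h / 2))).
Let action'' x := - k ^ 2 * (D * cos (k * (x - h / 2)) + E * sin (k * (x - h / 2))).
Let buffer x := B * cos (k * (x - h)).
Let buffer' x := - (B * k * sin (k * (x - h))).

Lemma core_derive x : derivable_pt_lim core x (core' x).
Proof. apply is_derive_Reals. unfold core, core'. auto_derive; auto. unfold Rminus. ring. Qed.

Lemma action_derive x : derivable_pt_lim action x (action' x).
Proof. apply is_derive_Reals. unfold action, action'. auto_derive; auto. unfold Rminus. ring. Qed.

Lemma action'_derive x : derivable_pt_lim action' x (action'' x).
Proof. apply is_derive_Reals. unfold action', action''. auto_derive; auto. unfold Rminus. ring. Qed.

Lemma buffer_derive x : derivable_pt_lim buffer x (buffer' x).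
Proof. apply is_derive_Reals. unfold buffer, buffer'. auto_derive; auto. unfold Rminus. ring. Qed.

Lemma core_action_matching : A * c - C - D * c + E * s = 0 /\ A * s + D * s + E * c = 0.
Proof.
  destruct (C1_interface phi dphi core core' action action' (h / 4) (h / 4))
    as [Hv Hd]; auto using core_derive, action_derive.
  - lra.
  - unfold core'. reg.
  - unfold action'. reg.
  - intros x Hx. apply hcore. apply Rabs_def1; lra.
  - intros x Hx. apply hactR. lra.
  - unfold core, core', action, action' in Hv, Hd.
    replace (k * (h / 4)) with (k * h / 4) in Hv, Hd by field.
    replace (k * (h / 4 - h / 2)) with (- (k * h / 4)) in Hv, Hd by field.
    rewrite cos_neg, sin_neg in Hv, Hd.
    split; [lra|]. apply (Rmult_eq_0_reg_r _ k); lra.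
Qed.

Lemma action_buffer_matching :
  C + D * c + E * s - B * c = 0 /\ - (D * s) + E * c - B * s = 0.
Proof.
  destruct (C1_interface phi dphi action action' buffer buffer' (3 * h / 4) (h / 4))
    as [Hv Hd]; auto using action_derive, buffer_derive.
  - lra.
  - unfold action'. reg.
  - unfold buffer'. reg.
  - intros x Hx. apply hactR. lra.
  - intros x Hx. apply hbufR. lra.
  - unfold action, action', buffer, buffer' in Hv, Hd.
    replace (k * (3 * h / 4 - h / 2)) with (k * h / 4) in Hv, Hd by field.
    replace (k * (3 * h / 4 - h)) with (- (k * h / 4)) in Hv, Hd by field.
    rewrite cos_neg in Hv. rewrite sin_neg in Hd.
    split; [lra|]. apply (Rmult_eq_0_reg_r _ k); lra.
Qed.

Lemma core_integral Ic : is_integral phi (- (h / 4)) (h / 4) Ic -> Ic = 2 * A * s / k.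
Proof.
  intros HI.
  rewrite (is_integral_antiderivative phi core (fun x => A * sin (k * x) / k)
    (- (h / 4)) (h / 4) Ic); auto; try lra.
  - replace (k * (h / 4)) with (k * h / 4) by field.
    replace (k * - (h / 4)) with (- (k * h / 4)) by field.
    rewrite sin_neg. field. lra.
  - intro x. apply is_derive_Reals. unfold core. auto_derive; auto. field. lra.
  - intro x. unfold core. reg.
  - intros x Hx. apply hcore. apply Rabs_def1; lra.
Qed.

Lemma action_integral Ir : is_integral phi (h / 4) (3 * h / 4) Ir ->
  Ir = C * h / 2 + 2 * D * s / k.
Proof.
  intros HI.
  rewrite (is_integral_antiderivative phi action
    (fun x => C * x + (D * sin (k * (x - h / 2)) - E * cos (k * (x - h / 2))) / k)
    (h / 4) (3 * h / 4) Ir);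
    auto; try lra.
  - replace (k * (3 * h / 4 - h / 2)) with (k * h / 4) by field.
    replace (k * (h / 4 - h / 2)) with (- (k * h / 4)) by field.
    rewrite sin_neg, cos_neg. field. lra.
  - intro x. apply is_derive_Reals. unfold action. auto_derive; auto. unfold Rminus. field. lra.
  - intro x. unfold action. reg.
  - intros x Hx. apply hactR. lra.
Qed.

Lemma action_second_derivative Txx : derivable_pt_lim dphi (h / 2) Txx -> Txx = - (D * k ^ 2).
Proof.
  intros HTxx.
  assert (Hdphi : forall y, h / 4 < y < 3 * h / 4 -> dphi y = action' y).
  { intros y Hy. apply (derive_eq_on_open phi dphi action (h / 4) (3 * h / 4));
      auto using action_derive.
    intros z Hz. apply hactR. lra. }
  transitivity (action'' (h / 2)).
  - apply (uniqueness_limite dphi (h / 2)); auto.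
    apply (derivable_pt_lim_locally_ext action' dphi _ (h / 4) (3 * h / 4));
      auto using action'_derive; [lra|].
    intros z Hz. symmetry. auto.
  - unfold action''. rewrite Rminus_diag, Rmult_0_r, cos_0, sin_0. ring.
Qed.

Lemma midpoint_balance (K mu H Ic Il Ir Txx : R) : 0 < K -> 0 < mu ->
  is_integral phi (- (h / 4)) (h / 4) Ic -> is_integral phi (h / 4) (3 * h / 4) Ir ->
  derivable_pt_lim dphi (h / 2) Txx ->
  - (K * k ^ 2) * phi (h / 2) = K * Txx + K * mu / h ^ 2 * g_ctrl h H (h / 2) Ic Il Ir ->
  (1 - 13 * (h / H) ^ 2 / 48) / (1 - (h / H) ^ 2 / 48) * (4 / (k * h)) * A * s - C
    - 4 / (k * h) * D * s + k ^ 2 * h ^ 2 / mu * C = 0.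
Proof.
  intros HK Hmu HIc HIr HTxx Heq.
  rewrite hactR, Rminus_diag, Rmult_0_r, cos_0, sin_0 in Heq by lra.
  rewrite (action_second_derivative Txx HTxx) in Heq.
  unfold g_ctrl, T_int in Heq.
  destruct (Rlt_dec (h / 4) (h / 2)); [|lra].
  destruct (Rlt_dec (h / 2) (3 * h / 4)); [|lra].
  rewrite (core_integral Ic HIc), (action_integral Ir HIr) in Heq.
  set (rho := (1 - 13 * (h / H) ^ 2 / 48) / (1 - (h / H) ^ 2 / 48)) in *.
  apply (Rmult_eq_0_reg_r _ (K * mu / h ^ 2)).
  - transitivity (K * - (D * k ^ 2) + K * mu / h ^ 2 *
        (2 / h * (2 * A * s / k) * rho - 2 / h * (C * h / 2 + 2 * D * s / k))
      - - (K * k ^ 2) * (C + D * 1 + E * 0)).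
    + field. repeat split; lra.
    + lra.
  - apply Rgt_not_eq, Rdiv_lt_0_compat; [nra | apply pow_lt; lra].
Qed.

Lemma profile_vanishes : A = 0 -> B = 0 -> C = 0 -> D = 0 -> E = 0 ->
  forall x, - h <= x <= h -> phi x = 0.
Proof.
  intros -> -> -> -> -> x Hx.
  destruct (Rlt_le_dec (Rabs x) (h / 4)) as [Hc|Hc]; [rewrite hcore by exact Hc; ring|].
  destruct (Rle_lt_dec 0 x) as [Hpos|Hneg].
  - rewrite Rabs_right in Hc by lra.
    destruct (Rle_lt_dec x (3 * h / 4)); [rewrite hactR by lra | rewrite hbufR by lra]; ring.
  - rewrite Rabs_left in Hc by lra.
    destruct (Rle_lt_dec (- x) (3 * h / 4)); [rewrite hactL by lra | rewrite hbufL by lra];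
      ring.
Qed.
End Profile.

Theorem mainTheorem2 (K mu h H k A B C D E : R) (phi : R -> R)
  (hK : 0 < K) (hmu : 0 < mu) (hh : 0 < h) (hr : 0 < h / H < 1) (hk : 0 < k)
  (hcore : forall x, Rabs x < h / 4 -> phi x = A * cos (k * x))
  (hactR : forall x, h / 4 <= x <= 3 * h / 4 ->
     phi x = C + D * cos (k * (x - h / 2)) + E * sin (k * (x - h / 2)))
  (hactL : forall x, h / 4 <= - x <= 3 * h / 4 ->
     phi x = C + D * cos (k * (x + h / 2)) - E * sin (k * (x + h / 2)))
  (hbufR : forall x, 3 * h / 4 <= x <= h -> phi x = B * cos (k * (x - h)))
  (hbufL : forall x, 3 * h / 4 <= - x <= h -> phi x = B * cos (k * (x + h)))
  (hnz : exists x, phi x <> 0)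
  (hsol : solves_patch K mu h H (fun x t => exp (- (K * k ^ 2 * t)) * phi x)) :
  let r := h / H in
  cos (k * h / 2) * sin (k * h / 4) *
    ((1 - 7 * r ^ 2 / 48) / (1 - r ^ 2 / 48) * (4 / (k * h)) * sin (k * h / 4)
     + (k ^ 2 * h ^ 2 / mu - 1) * cos (k * h / 4)) = 0.
Proof.
  intros r.
  destruct (separable_patch_profile K mu h H (K * k ^ 2) phi hsol)
    as [Hper [dphi [Hd [Hdc [Ic [Il [Ir [HIc [HIr Heig]]]]]]]]].
  assert (Hmid : region_interior h (h / 2)).
  { unfold region_interior. rewrite Rabs_right by lra. split; [lra | split; intro; lra]. }
  destruct (Heig (h / 2) Hmid) as [Txx [HTxx Hbal]].
  destruct (core_action_matching k h A C D E phi dphi hk hh hcore hactR Hd Hdc) as [E1 E2].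
  destruct (action_buffer_matching k h B C D E phi dphi hk hh hactR hbufR Hd Hdc)
    as [E3 E4].
  pose proof (midpoint_balance k h A C D E phi dphi hk hh hcore hactR Hd
    K mu H Ic Il Ir Txx hK hmu HIc HIr HTxx Hbal) as E5.
  change (h / H) with r in E5.
  assert (Hr2 : 0 < 1 - r ^ 2 / 48) by (unfold r; nra).
  replace ((1 - 7 * r ^ 2 / 48) / (1 - r ^ 2 / 48))
    with ((1 + (1 - 13 * r ^ 2 / 48) / (1 - r ^ 2 / 48)) / 2) by (field; lra).
  replace (k * h / 2) with (2 * (k * h / 4)) by field.
  rewrite cos_2a.
  apply (patch_system_det _ _ _ _ _ A B C D E); auto.
  intros (-> & -> & -> & -> & ->).
  destruct hnz as [x Hx]. apply Hx.
  apply (periodic_eq_zero phi (- h) (2 * h)); [lra | exact Hper |].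
  intros y Hy. apply (profile_vanishes k h 0 0 0 0 0 phi); auto; lra.
Qed.
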